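(* Let $n,r\ge 1$, $V=\mathbb F_2^n$, and for each $1\le i\le r$ let $\rho_i\in\mathrm{Sym}(V)\setminus\mathrm{AGL}(V)$ and $\theta_i\in\mathrm{GL}(V)$. Define $\overline{\rho}_i,\overline\theta_i\in\mathrm{Sym}(V\times V)$ by $(x,y)\overline\rho_i=(x+y,\ y+(x+y)\rho_i)$ and $(x,y)\overline\theta_i=((x+y)\theta_i,\ y)$. If for some index $i\in\{1,\dots,r\}$ the group $\langle\rho_i,T_n\rangle$ (the group generated by the $i$-th round functions $\rho_i\sigma_k$, $k\in V$, of the corresponding substitution permutation network) is primitive on $V$, then the group $$\big\langle \langle\overline\rho_i,\overline\theta_i,T_{2n}\rangle \;\big|\; 1\le i\le r\big\rangle\le\mathrm{Sym}(V\times V)$$ is primitive on $V\times V$.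
   Context: Maps act on the right: $x\rho$ is the image of $x$ under $\rho$. $T_n$ is the group of translations $\sigma_v:x\mapsto x+v$ of $V$, and $T_{2n}$ is the group of translations $(x,y)\mapsto(x+v,y+w)$ of $V\times V$. $\mathrm{AGL}(V)$ is the group of affine permutations of $V$, $\mathrm{GL}(V)$ the group of linear ones. A group $G$ acting on a set $M$ is primitive if it is transitive and there is no $G$-invariant partition of $M$ other than $\{M\}$ and the partition into singletons. *)

From mathcomp Require Import all_boot all_order all_algebra all_fingroup all_solvable.
Set Implicit Arguments. Unset Strict Implicit. Unset Printing Implicit Defensive.
Import GRing.Theory.
Local Open Scope ring_scope.

(* V = F_2^n as row vectors; maps act on the right (x *m A), matching
   MathComp's convention (s * t) x = t (s x) for permutations. *)
Notation Vec n := 'rV['F_2]_n.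

Definition AGL n : {set {perm Vec n}} :=
  [set p : {perm Vec n} | [exists A : 'M['F_2]_n, exists b : Vec n, forall x, p x == x *m A + b]].
Definition GL n : {set {perm Vec n}} :=
  [set p : {perm Vec n} | [exists A : 'M['F_2]_n, forall x, p x == x *m A]].

Lemma transl_inj n (v : Vec n) : injective (fun x : Vec n => x + v).
Proof. exact: addIr. Qed.
Definition transl n (v : Vec n) : {perm Vec n} := perm (@transl_inj n v).
Definition Tn n : {set {perm Vec n}} := [set transl v | v : Vec n].

Lemma transl2_inj n (v w : Vec n) :
  injective (fun p : Vec n * Vec n => (p.1 + v, p.2 + w)).
Proof. by move=> [x y] [x' y'] [/addIr -> /addIr ->]. Qed.
Definition transl2 n (v w : Vec n) : {perm Vec n * Vec n} := perm (@transl2_inj n v w).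
Definition T2n n : {set {perm Vec n * Vec n}} :=
  [set transl2 vw.1 vw.2 | vw : Vec n * Vec n].

Lemma rhobar_inj n (rho : {perm Vec n}) :
  injective (fun p : Vec n * Vec n => (p.1 + p.2, p.2 + rho (p.1 + p.2))).
Proof.
move=> [x y] [x' y'] /= [e1 e2].
rewrite e1 in e2; move/addIr: e2 => ey; rewrite ey in e1.
by move/addIr: e1 => ->; rewrite ey.
Qed.
Definition rhobar n (rho : {perm Vec n}) : {perm Vec n * Vec n} :=
  perm (@rhobar_inj n rho).

Lemma thetabar_inj n (theta : {perm Vec n}) :
  injective (fun p : Vec n * Vec n => (theta (p.1 + p.2), p.2)).
Proof.
move=> [x y] [x' y'] /= [/perm_inj e1 e2]; rewrite e2 in e1 *.
by move/addIr: e1 => ->.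
Qed.
Definition thetabar n (theta : {perm Vec n}) : {perm Vec n * Vec n} :=
  perm (@thetabar_inj n theta).

(* Let X be a finite abelian group and G a permutation group of X containing
   all translations.  The blocks of G through 0 are then exactly the subgroups
   W of X whose coset partition G preserves, i.e. with g (x + w) - g x in W
   for g in G, w in W ("G-stable subgroups").  Hence G is primitive iff its
   only stable subgroups are 0 and X; both directions are proved first, via
   the correspondence between the overgroups of the stabiliser of 0 and the
   subgroups of translations they contain.

   For V = F_2^n, let W <= V x V be stable under rhobar and thetabar, where
   rho is non-affine and generates a primitive group with the translations.
   With E = {e | (e,0) in W} and K = {k | (0,k) in W}, thetabar gives K <= E
   and rhobar shows that the derivatives of rho along E lie in K, so E is
   rho-stable, hence E = 0 or E = V.  If E = V then K is rho-stable, K = 0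
   would make rho affine, so K = V and W = V x V.  If E = 0 then W is the graph
   of a map, rho has constant derivatives along the first projection P1 of W,
   and P1 is rho-stable; P1 = 0 gives W = 0, while P1 = V makes rho affine. *)

From HB Require Import structures.
From mathcomp Require Import all_boot all_order all_algebra all_fingroup all_solvable.
Set Implicit Arguments. Unset Strict Implicit. Unset Printing Implicit Defensive.
Import GRing.Theory.
Local Open Scope group_scope.
Local Open Scope ring_scope.

Lemma perm_mem_stable (T : finType) (g : {perm T}) (A : {set T}) :
  (forall x, x \in A -> g x \in A) -> forall x, (g x \in A) = (x \in A).
Proof.
move=> gA x; have gAA : g @: A = A.
  apply/eqP; rewrite eqEcard (card_imset _ (@perm_inj _ g)) leqnn andbT.
  by apply/subsetP=> _ /imsetP[y Ay ->]; apply: gA.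
by rewrite -{1}gAA (mem_imset _ _ (@perm_inj _ g)).
Qed.

Section StableSubgroups.
Variable X : finZmodType.

Definition tr (v : X) : {perm X} := perm (@addIr X v).

Lemma trE v x : tr v x = x + v. Proof. by rewrite permE. Qed.
Lemma tr0 : tr 0 = 1%g. Proof. by apply/permP=> x; rewrite trE perm1 addr0. Qed.
Lemma trD u v : tr (u + v) = (tr u * tr v)%g.
Proof. by apply/permP=> x; rewrite permM !trE addrA. Qed.
Lemma trN v : tr (- v) = (tr v)^-1%g.
Proof. by apply: (mulgI (tr v)); rewrite mulgV -trD addrN tr0. Qed.

Definition addsub (W : {set X}) : Prop :=
  0 \in W /\ forall x y, x \in W -> y \in W -> x - y \in W.

Lemma addsubD (W : {set X}) : addsub W -> forall x y, x \in W -> y \in W -> x + y \in W.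
Proof.
move=> [W0 WB] x y Wx Wy; have WNy : - y \in W by rewrite -sub0r WB.
by rewrite -[y]opprK WB.
Qed.

Definition stable (G : {set {perm X}}) (W : {set X}) : Prop :=
  forall g, g \in G -> forall x w, w \in W -> g (x + w) - g x \in W.

Lemma tr_stable (W : {set X}) v x w : w \in W -> tr v (x + w) - tr v x \in W.
Proof. by move=> Ww; rewrite !trE [x + v]addrC addrKA addrC addKr. Qed.

Definition coset_stab (W : {set X}) : {set {perm X}} :=
  [set g : {perm X} | [forall x, [forall w, (w \in W) ==> (g (x + w) - g x \in W)]]].

Lemma coset_stabP (W : {set X}) (g : {perm X}) :
  reflect (forall x w, w \in W -> g (x + w) - g x \in W) (g \in coset_stab W).
Proof.
rewrite inE; apply: (iffP forallP) => [h x w Ww | h x].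
  by have /forallP/(_ w)/implyP := h x; apply.
by apply/forallP=> w; apply/implyP; apply: h.
Qed.

Lemma coset_stab_group (W : {set X}) : group_set (coset_stab W).
Proof.
apply/andP; split; first by apply/coset_stabP=> x w Ww; rewrite !perm1 addrC addKr.
apply/subsetP=> _ /mulsgP[a b /coset_stabP Ia /coset_stabP Ib ->].
apply/coset_stabP=> x w Ww; rewrite !permM.
by have := Ib (a x) _ (Ia x w Ww); rewrite [a x + _]addrC subrK.
Qed.

Lemma stable_gen (A : {set {perm X}}) (W : {set X}) : stable A W -> stable <<A>> W.
Proof.
move=> hA g; have: <<A>> \subset Group (coset_stab_group W).
  by rewrite gen_subG; apply/subsetP=> a Aa; apply/coset_stabP; apply: hA.
by move/subsetP=> sAW /sAW /coset_stabP.
Qed.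

Lemma actPE (x : X) (s : {perm X}) : 'P%act x s = s x. Proof. by []. Qed.

Section TranslationGroup.
Variable G : {group {perm X}}.
Hypothesis trG : forall v, tr v \in G.

Lemma tr_transitive : [transitive G, on [set: X] | 'P].
Proof.
apply/imsetP; exists 0 => //; apply/eqP; rewrite eq_sym eqEsubset subsetT /=.
by apply/subsetP=> y _; have := mem_orbit 'P 0 (trG y); rewrite actPE trE add0r.
Qed.

Lemma tr_correct_stab0 g : g \in G -> (g * tr (- g 0))%g \in 'C_G[0 | 'P].
Proof.
by move=> Gg; rewrite inE groupM //=; apply/astab1P; rewrite actPE permM trE addrN.
Qed.

Lemma primitive_max_stab0 :
  [primitive G, on [set: X] | 'P] = maximal_eq 'C_G[0 | 'P] G.
Proof. by rewrite (trans_prim_astab (x:=0)) ?inE ?tr_transitive. Qed.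

Section Overgroup.
Variable H : {group {perm X}}.
Hypotheses (sCH : 'C_G[0 | 'P] \subset H) (sHG : H \subset G).

Definition tr_part : {set X} := [set v | tr v \in H].

Lemma tr_part_orbit h : h \in H -> h 0 \in tr_part.
Proof.
move=> Hh; have := subsetP sCH _ (tr_correct_stab0 (subsetP sHG _ Hh)).
by rewrite inE groupMl // trN groupV.
Qed.

Lemma tr_part_addsub : addsub tr_part.
Proof.
split; first by rewrite inE tr0 group1.
by move=> x y; rewrite !inE => Hx Hy; rewrite trD trN groupM ?groupV.
Qed.

Lemma tr_part_stable : stable G tr_part.
Proof.
move=> g Gg x w; rewrite inE => Hw.
pose k := (tr x * g * tr (- g x))%g.
have k0 : k 0 = 0 by rewrite !permM !trE add0r addrN.
have Hk : k \in H.
  have Gk : k \in G by rewrite !groupM.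
  by apply: (subsetP sCH); rewrite inE Gk; apply/astab1P.
have kw : k w = g (x + w) - g x by rewrite !permM !trE [w + x]addrC.
clearbody k.
have k'0 : k^-1%g 0 = 0 by rewrite -{1}k0 permK.
have := tr_part_orbit (groupM (groupM (groupVr Hk) Hw) Hk).
by rewrite !permM k'0 trE add0r kw.
Qed.

End Overgroup.

Lemma primitive_of_stable_trivial :
  (forall W, addsub W -> stable G W -> W = [set 0] \/ W = setT) ->
  [primitive G, on [set: X] | 'P].
Proof.
move=> hW; rewrite primitive_max_stab0; apply/maximal_eqP; split=> [|H sCH sHG].
  exact: subsetIl.
have [W0|WT] := hW _ (tr_part_addsub H) (tr_part_stable sCH sHG); [left|right].
  apply/eqP; rewrite eqEsubset sCH andbT; apply/subsetP=> h Hh.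
  rewrite inE (subsetP sHG _ Hh); apply/astab1P; rewrite actPE.
  by have := tr_part_orbit sCH sHG Hh; rewrite W0 inE => /eqP.
apply/eqP; rewrite eqEsubset sHG /=; apply/subsetP=> g Gg.
have Hg0 : tr (g 0) \in H by have := in_setT (g 0); rewrite -WT inE.
by have := subsetP sCH _ (tr_correct_stab0 Gg); rewrite trN groupMr ?groupV.
Qed.

(* Conversely, the set-wise stabiliser of a stable subgroup W contains the
   stabiliser of 0, so by primitivity W is trivial. *)
Lemma stable_trivial_of_primitive :
  [primitive G, on [set: X] | 'P] ->
  forall W, addsub W -> stable G W -> W = [set 0] \/ W = setT.
Proof.
rewrite primitive_max_stab0 => /maximal_eqP[_ maxC] W [W0 WB] sW.
pose H := 'N_G(W | 'P)%G.
have sCH : 'C_G[0 | 'P] \subset H.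
  apply/subsetP=> g; rewrite inE => /andP[Gg /astab1P]; rewrite actPE => g0.
  rewrite inE Gg; apply/astabsP=> x; rewrite actPE; apply: perm_mem_stable => y Wy.
  by have := sW g Gg 0 y Wy; rewrite add0r g0 subr0.
have trH v : v \in W -> tr v \in H.
  move=> Wv; rewrite inE trG; apply/astabsP=> x; rewrite actPE trE.
  by apply/idP/idP=> Wx; [rewrite -(addrK v x) WB | rewrite addsubD].
have [HC|HG] := maxC H sCH (subsetIl _ _); [left|right]; apply/setP=> v.
  rewrite inE; apply/idP/eqP=> [Wv|->] //.
  by move: (trH v Wv); rewrite HC inE => /andP[_ /astab1P]; rewrite actPE trE add0r.
have : tr v \in H by rewrite HG.
by rewrite inE => /andP[_ /astabsP/(_ 0)]; rewrite actPE trE add0r inE => ->.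
Qed.

End TranslationGroup.

End StableSubgroups.

Definition VV n := (Vec n * Vec n)%type.
HB.instance Definition _ n := Finite.on (VV n).
HB.instance Definition _ n := GRing.Zmodule.on (VV n).

Lemma pair_sub n (a b c d : Vec n) : ((a, b) - (c, d) : VV n) = (a - c, b - d).
Proof. by []. Qed.

Lemma tr_transl n (v : Vec n) : tr v = transl v.
Proof. by apply/permP=> x; rewrite trE permE. Qed.

Lemma tr_transl2 n (v w : Vec n) : tr ((v, w) : VV n) = transl2 v w.
Proof. by apply/permP=> [[x y]]; rewrite trE permE. Qed.

(* Over F_2 a permutation whose derivatives x |-> r (q + x) - r q do not
   depend on q is affine: x |-> r x - r 0 is additive, hence linear. *)
Lemma const_derivative_AGL n (r : {perm Vec n}) :
  (forall s q, r (q + s) - r q = r s - r 0) -> r \in AGL n.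
Proof.
move=> h; pose f x := r x - r 0.
have fD a b : f (a + b) = f a + f b.
  by rewrite /f -(h b a) [RHS]addrC addrA subrK.
have fZ (c : 'F_2) v : f (c *: v) = c *: f v.
  case: c => [[|[|k]] //= Hc].
    by rewrite (_ : Ordinal Hc = 0); [rewrite !scale0r /f subrr | exact: val_inj].
  by rewrite (_ : Ordinal Hc = 1); [rewrite !scale1r | exact: val_inj].
pose A : 'M['F_2]_n := \matrix_(i, j) f (delta_mx 0 i) 0 j.
have fA x : f x = x *m A.
  rewrite mulmx_sum_row {1}(row_sum_delta x).
  rewrite (big_morph f fD (subrr _)); apply: eq_bigr => i _; rewrite fZ.
  by congr (_ *: _); apply/rowP=> j; rewrite !mxE.
rewrite inE; apply/existsP; exists A; apply/existsP; exists (r 0).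
by apply/forallP=> x; rewrite -fA /f subrK.
Qed.

Section LiftedStableSubgroups.
Variables (n : nat) (r th : {perm Vec n}).
Hypothesis r_nonaffine : r \notin AGL n.
Hypothesis thD : forall a b, th (a + b) = th a + th b.
Hypothesis r_primitive :
  forall U : {set Vec n}, addsub U -> stable [set r] U -> U = [set 0] \/ U = setT.
Variable W : {set VV n}.
Hypothesis W_addsub : addsub W.
Hypothesis W_stable : stable ([set rhobar r; thetabar th] : {set {perm VV n}}) W.

Lemma W_zero : ((0, 0) : VV n) \in W. Proof. exact: W_addsub.1. Qed.

Lemma W_sub a b c d : (a, b) \in W -> (c, d) \in W -> (a - c, b - d) \in W.
Proof. exact: W_addsub.2. Qed.

Lemma W_add a b c d : (a, b) \in W -> (c, d) \in W -> (a + c, b + d) \in W.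
Proof. exact: addsubD. Qed.

Lemma rhobar_in : rhobar r \in ([set rhobar r; thetabar th] : {set {perm VV n}}).
Proof. by rewrite !inE eqxx. Qed.

Lemma thetabar_in : thetabar th \in ([set rhobar r; thetabar th] : {set {perm VV n}}).
Proof. by rewrite !inE eqxx orbT. Qed.

Lemma rhobar_step w1 w2 q : (w1, w2) \in W ->
  (w1 + w2, w2 + (r (q + (w1 + w2)) - r q)) \in W.
Proof.
move=> Ww; have := W_stable rhobar_in (q, 0) Ww.
rewrite !permE /= !add0r !addr0 -addrA; move: (r _) (r q) => a b.
by rewrite pair_sub [q + _ - q]addrC addKr -addrA.
Qed.

Lemma th0 : th 0 = 0.
Proof. by apply: (@addrI _ (th 0)); rewrite -thD !addr0. Qed.

Lemma thetabar_step w1 w2 : (w1, w2) \in W -> (th (w1 + w2), w2) \in W.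
Proof.
move=> Ww; have := W_stable thetabar_in (0, 0) Ww.
by rewrite !permE /= !add0r th0 pair_sub !subr0.
Qed.

Let E : {set Vec n} := [set e | (e, 0) \in W].
Let K : {set Vec n} := [set k | (0, k) \in W].

Lemma E_addsub : addsub E.
Proof.
split=> [|x y]; first by rewrite inE W_zero.
by rewrite !inE => Ex Ey; have := W_sub Ex Ey; rewrite subr0.
Qed.

Lemma K_addsub : addsub K.
Proof.
split=> [|x y]; first by rewrite inE W_zero.
by rewrite !inE => Kx Ky; have := W_sub Kx Ky; rewrite subr0.
Qed.

(* thetabar maps (0, k) to (th k, k), so th k and hence k lie in E. *)
Lemma K_sub_E k : k \in K -> k \in E.
Proof.
move=> Kk; have thE e : e \in E -> th e \in E.
  by rewrite !inE => Ee; have := thetabar_step Ee; rewrite addr0.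
rewrite -(perm_mem_stable thE) inE; rewrite inE in Kk.
by have := W_sub (thetabar_step Kk) Kk; rewrite add0r subr0 subrr.
Qed.

(* rhobar maps (e, 0) to (e, r (q + e) - r q) modulo W. *)
Lemma deriv_E_in_K e q : e \in E -> r (q + e) - r q \in K.
Proof.
rewrite !inE => Ee; have := W_sub (rhobar_step q Ee) Ee.
by rewrite !addr0 subrr add0r subr0.
Qed.

Lemma E_stable : stable [set r] E.
Proof. by move=> g /set1P -> x w Ew; apply/K_sub_E/deriv_E_in_K. Qed.

(* If E = V then K is r-stable; K = 0 would make every derivative of r
   vanish, so K = V and W = V x V. *)
Lemma W_full_of_E_full : E = setT -> W = setT.
Proof.
move=> ET; have Kr : stable [set r] K.
  by move=> g /set1P -> x w _; apply: deriv_E_in_K; rewrite ET inE.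
have [K0|KT] := r_primitive K_addsub Kr.
  have d0 s q : r (q + s) - r q = 0.
    by apply/set1P; rewrite -K0 deriv_E_in_K // ET inE.
  case/negP: r_nonaffine; apply: const_derivative_AGL => s q.
  by have := d0 s 0; rewrite add0r d0 => ->.
apply/setP=> [[a b]]; rewrite inE.
have Ea : (a, 0) \in W by have := in_setT a; rewrite -ET inE.
have Kb : (0, b) \in W by have := in_setT b; rewrite -KT inE.
by have := W_add Ea Kb; rewrite addr0 add0r.
Qed.

Section TrivialHorizontalPart.
Hypothesis E0 : E = [set 0].

Lemma K_trivial k : k \in K -> k = 0.
Proof. by move/K_sub_E; rewrite E0 => /set1P. Qed.

Lemma W_graph x y : (x, y) \in W -> th (x + y) = x.
Proof.
move=> Wxy; apply/eqP; rewrite -subr_eq0; apply/eqP/set1P; rewrite -E0 inE.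
by have := W_sub (thetabar_step Wxy) Wxy; rewrite subrr.
Qed.

Lemma const_deriv x y q : (x, y) \in W ->
  r (q + (x + y)) - r q = r (x + y) - r 0.
Proof.
move=> Wxy; apply/eqP; rewrite -subr_eq0; apply/eqP/K_trivial; rewrite inE.
have := W_sub (rhobar_step q Wxy) (rhobar_step 0 Wxy).
by rewrite add0r subrr [y + _]addrC addrKA.
Qed.

Let P1 : {set Vec n} := [set p.1 | p in W].
Let S : {set Vec n} := [set p.1 + p.2 | p in W].

Lemma P1_addsub : addsub P1.
Proof.
split; first exact: (imset_f _ W_zero).
move=> _ _ /imsetP[[a b] Wab ->] /imsetP[[c d] Wcd ->].
by apply/imsetP; exists (a - c, b - d); first exact: W_sub.
Qed.

(* S <= P1 by rhobar, and th maps S onto P1 by the graph property. *)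
Lemma P1_eq_S : P1 = S.
Proof.
have SP1 : S \subset P1.
  apply/subsetP=> _ /imsetP[[x y] Wxy ->].
  by apply/imsetP; exists (x + y, y + (r (0 + (x + y)) - r 0)); first exact: rhobar_step.
have thS : th @: S = P1.
  rewrite -imset_comp; apply: eq_in_imset => -[x y] Wxy.
  exact: W_graph.
by apply/esym/eqP; rewrite eqEcard SP1 -thS (card_imset _ (@perm_inj _ th)) leqnn.
Qed.

(* The derivative of r along x + y is the constant c, and (y, c) lies in W,
   so c = (y + c) - y lies in S = P1. *)
Lemma P1_stable : stable [set r] P1.
Proof.
move=> g /set1P -> q; rewrite P1_eq_S => _ /imsetP[[x y] Wxy ->] /=.
rewrite const_deriv //; set c := r (x + y) - r 0.
have Wyc : (y, c) \in W.
  have := W_sub (rhobar_step 0 Wxy) Wxy.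
  by rewrite add0r [x + y - x]addrC addKr [y + _ - y]addrC addKr.
have Py : y \in P1 by apply/imsetP; exists (y, c).
have Pyc : y + c \in P1 by rewrite P1_eq_S; apply/imsetP; exists (y, c).
by rewrite -P1_eq_S -(addKr y c) addrC; apply: P1_addsub.2.
Qed.

(* P1 = 0 forces W = 0, while P1 = V would make r affine. *)
Lemma W_trivial_of_E_trivial : W = [set 0].
Proof.
have [P0|PT] := r_primitive P1_addsub P1_stable.
  apply/setP=> -[a b]; rewrite inE; apply/idP/eqP=> [Wab|->]; last exact: W_zero.
  have a0 : a = 0 by apply/set1P; rewrite -P0; apply/imsetP; exists (a, b).
  by rewrite a0 (K_trivial (k := b)) // inE -a0.
case/negP: r_nonaffine; apply: const_derivative_AGL => s q.
have : s \in S by rewrite -P1_eq_S PT inE.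
by case/imsetP=> -[x y] Wxy ->; apply: const_deriv.
Qed.

End TrivialHorizontalPart.

Lemma lifted_stable_trivial : W = [set 0] \/ W = setT.
Proof.
have [E0|ET] := r_primitive E_addsub E_stable.
  by left; apply: W_trivial_of_E_trivial.
by right; apply: W_full_of_E_full.
Qed.

End LiftedStableSubgroups.

(* The lifted group contains T_2n, and a subgroup of V x V stable under it is
   stable under rhobar_i and thetabar_i for the primitive index i; the
   subgroups of V stable under rho_i are those stable under <rho_i, T_n>. *)
Theorem corollary3p4 (n r : nat) (rho theta : 'I_r -> {perm Vec n}) :
  (0 < n)%N -> (0 < r)%N ->
  (forall i, rho i \notin AGL n) ->
  (forall i, theta i \in GL n) ->
  (exists i, [primitive <<rho i |: Tn n>>%g, on [set: Vec n] | 'P]) ->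
  [primitive << \bigcup_(i < r) <<[set rhobar (rho i); thetabar (theta i)] :|: T2n n>>%g >>%g,
     on [set: Vec n * Vec n] | 'P].
Proof.
move=> _ _ nonaffine linear [i prim_i].
have [A thetaE] : exists A : 'M['F_2]_n, forall x, theta i x = x *m A.
  by move: (linear i); rewrite inE => /existsP[A /forallP thA]; exists A => x; apply/eqP.
set G := << \bigcup_(j < r) _ >>.
have inG g : g \in [set rhobar (rho i); thetabar (theta i)] :|: T2n n -> g \in G.
  by move=> gen_g; apply/mem_gen/bigcupP; exists i => //; apply: mem_gen.
apply: (@primitive_of_stable_trivial (VV n) G%G).
  by move=> [v w]; rewrite tr_transl2; apply/inG/setUP; right; apply/imsetP; exists (v, w).
move=> W addW stW; apply: (lifted_stable_trivial (nonaffine i) (th := theta i)) => //.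
- by move=> a b; rewrite !thetaE mulmxDl.
- move=> U addU stU; apply: (stable_trivial_of_primitive _ prim_i) => //.
    by move=> v; rewrite tr_transl; apply/mem_gen/setU1P; right; apply: imset_f.
  apply: stable_gen => g /setU1P[->|/imsetP[v _ ->]]; first exact/stU/set11.
  by move=> x w; rewrite -tr_transl; apply: tr_stable.
- by move=> g gen_g; apply/stW/inG/setUP; left.
Qed.
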